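(* Let $c_{db}$ be large enough (depending only on $s,d$) so that the following holds: for any chain $Q_0\supset Q_1\supset\dots\supset Q_n$ in $\mathcal D$ with $Q_j$ a child of $Q_{j-1}$ and $Q_j$ not $p$-doubling for $1\le j\le n$, one has $\Theta(Q_j)\le 2^{-j/2}p(Q_0)$ for all $j$. Fix $Q\in\mathcal D$ and let $J\subset\mathcal D$ be a family of cubes contained in $Q$ such that for every $P\in J$, every cube $P'\in\mathcal D$ with $P\subset P'\subset Q$ is not $p$-doubling. Then $$\sigma(J)\le 2\,p(Q)^2\,\mu(Q).$$
   Context: $0<s<d$. $E\subset\mathbb R^d$ is a Cantor set built from a compact $Q^0$ by repeatedly choosing, inside each closed ''cube'' $Q$ of generation $k$, a finite nonempty family of closed children (the cubes of generation $k+1$), such that each child $Q'$ of $Q$ satisfies $\frac18\ell(Q)\le\ell(Q')\le\frac13\ell(Q)$, where $\ell(Q)=\operatorname{diam}(Q)$, and distinct children of $Q$ are at distance $\ge c_{sep}\ell(Q)$. $\mathcal D$ is the family of all such cubes. $\mu$ is a finite Borel measure supported on $E$ with $\mu(Q)>0$ for all $Q\in\mathcal D$. $\Theta(Q)=\mu(Q)/\ell(Q)^s$, $p(Q)=\sum_{P\in\mathcal D,\,P\supset Q}\frac{\ell(Q)}{\ell(P)}\Theta(P)$, $Q$ is $p$-doubling (with constant $c_{db}$) if $p(Q)\le c_{db}\Theta(Q)$, and for $\mathcal A\subset\mathcal D$, $\sigma(\mathcal A)=\sum_{P\in\mathcal A}\Theta(P)^2\mu(P)$. *)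

From HB Require Import structures.
From mathcomp Require Import all_boot all_order all_algebra.
From mathcomp Require Import all_classical all_reals all_analysis.
Set Implicit Arguments. Unset Strict Implicit. Unset Printing Implicit Defensive.
Import Order.TTheory GRing.Theory Num.Theory.
Import numFieldNormedType.Exports.
Local Open Scope classical_set_scope.
Local Open Scope ring_scope.

(* Points of R^d are row vectors 'rV[R]_d.  The ambient measurable space is
   R^d with its Borel sigma-algebra (generated by the open sets). *)
Definition Rd (R : realType) (d : nat) := g_sigma_algebraType (@open 'rV[R]_d).

Definition edist (R : realType) (d : nat) (x y : 'rV[R]_d) : R :=
  Num.sqrt (\sum_(i < d) (x ord0 i - y ord0 i) ^+ 2).

Definition diam (R : realType) (d : nat) (A : set 'rV[R]_d) : R :=
  sup [set r | exists x y, A x /\ A y /\ r = edist x y].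

Definition setdist (R : realType) (d : nat) (A B : set 'rV[R]_d) : R :=
  inf [set r | exists x y, A x /\ B y /\ r = edist x y].

Fixpoint gen (R : realType) (d : nat) (Q0 : set 'rV[R]_d)
    (ch : set 'rV[R]_d -> set (set 'rV[R]_d)) (k : nat) : set (set 'rV[R]_d) :=
  match k with
  | 0 => [set Q0]
  | k'.+1 => \bigcup_(Q in gen Q0 ch k') ch Q
  end.

Definition cubes (R : realType) (d : nat) (Q0 : set 'rV[R]_d)
    (ch : set 'rV[R]_d -> set (set 'rV[R]_d)) : set (set 'rV[R]_d) :=
  \bigcup_(k in [set: nat]) gen Q0 ch k.

Definition cantor_set (R : realType) (d : nat) (Q0 : set 'rV[R]_d)
    (ch : set 'rV[R]_d -> set (set 'rV[R]_d)) : set 'rV[R]_d :=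
  \bigcap_(k in [set: nat]) \bigcup_(Q in gen Q0 ch k) Q.

Definition cantor_construction (R : realType) (d : nat) (csep : R)
    (Q0 : set 'rV[R]_d) (ch : set 'rV[R]_d -> set (set 'rV[R]_d)) : Prop :=
  [/\ 0 < csep, compact Q0, 0 < diam Q0 &
   forall Q, cubes Q0 ch Q ->
     [/\ finite_set (ch Q), ch Q !=set0,
       (forall Q', ch Q Q' -> closed Q' /\ Q' `<=` Q),
       (forall Q', ch Q Q' -> diam Q / 8 <= diam Q' /\ diam Q' <= diam Q / 3) &
       (forall Q1 Q2, ch Q Q1 -> ch Q Q2 -> Q1 <> Q2 ->
          csep * diam Q <= setdist Q1 Q2)]].

Section Densities.
Variables (R : realType) (d : nat) (s : R).
Variables (Q0 : set 'rV[R]_d) (ch : set 'rV[R]_d -> set (set 'rV[R]_d)).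
Variable mu : set (Rd R d) -> \bar R.

Definition Theta (Q : set 'rV[R]_d) : R := fine (mu Q) / (diam Q `^ s).

(* p(Q) = sum over cubes P of D containing Q of l(Q)/l(P) Theta(P)
   (a finite sum: the ancestors of Q) *)
Definition pdens (Q : set 'rV[R]_d) : R :=
  (\sum_(P \in [set P | cubes Q0 ch P /\ Q `<=` P]) (diam Q / diam P * Theta P))%R.

Definition p_doubling (cdb : R) (Q : set 'rV[R]_d) : Prop :=
  pdens Q <= cdb * Theta Q.

Definition sigma (A : set (set 'rV[R]_d)) : \bar R :=
  (\esum_(P in A) (Theta P ^+ 2 * fine (mu P))%:E)%E.
End Densities.

From Pilot Require Import Defs.
From HB Require Import structures.
From mathcomp Require Import all_boot all_order all_algebra.
From mathcomp Require Import all_classical all_reals all_analysis.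
From mathcomp Require Import finmap zify lra.
Set Implicit Arguments. Unset Strict Implicit. Unset Printing Implicit Defensive.
Import Order.TTheory GRing.Theory Num.Theory.
Import numFieldNormedType.Exports.
Local Open Scope classical_set_scope.
Local Open Scope ring_scope.

(* Every cube P of J is reached from Q through a chain of children
   Q = Q_0 > Q_1 > ... > Q_j = P of non p-doubling cubes, so the chain
   property gives Theta(P)^2 <= 2^-j p(Q)^2.  Grouping J by this depth j, the
   cubes of a fixed depth lie in one generation, hence are pairwise disjoint
   subcubes of Q and carry total mass at most mu(Q); summing the geometric
   series over j yields the factor 2. *)

Lemma sum_inv_pow2 (R : realFieldType) (n : nat) :
  \sum_(j < n) ((2 : R) ^+ j)^-1 = 2 - 2 * ((2 : R) ^+ n)^-1.
Proof.
elim: n => [|n IHn]; first by rewrite big_ord0 expr0 invr1 mulr1 subrr.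
rewrite big_ord_recr /= IHn exprS invfM mulrA mulfV ?pnatr_eq0 // mul1r.
set x := (2 ^+ n)^-1; lra.
Qed.

Lemma sum_inv_pow2_le2 (R : realFieldType) (n : nat) :
  \sum_(j < n) ((2 : R) ^+ j)^-1 <= 2.
Proof.
rewrite sum_inv_pow2; have : 0 <= ((2 : R) ^+ n)^-1 by rewrite invr_ge0 exprn_ge0.
set x := (_ ^+ n)^-1; lra.
Qed.

Lemma sum_dyadic_layers (R : realFieldType) (T : eqType) (t : seq T)
    (depth : T -> nat) (f g : T -> R) (c M : R) :
  0 <= c -> 0 <= M -> (forall x, x \in t -> 0 <= g x) ->
  (forall x, x \in t -> f x <= ((2 : R) ^+ depth x)^-1 * c) ->
  (forall j, \sum_(x <- t | depth x == j) g x <= M) ->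
  \sum_(x <- t) f x * g x <= 2 * c * M.
Proof.
move=> c_ge0 M_ge0 g_ge0 f_le layer_le.
have [N depth_le] : exists N, forall x, x \in t -> (depth x <= N)%N.
  by exists (\max_(x <- t) depth x) => x xt; rewrite leq_bigmax_seq.
have -> : \sum_(x <- t) f x * g x =
    \sum_(j < N.+1) \sum_(x <- t | inord (depth x) == j) f x * g x.
  exact: (partition_big (fun x => inord (depth x) : 'I_N.+1) xpredT).
apply: (@le_trans _ _ (\sum_(j < N.+1) ((2 : R) ^+ j)^-1 * c * M)).
  apply: ler_sum => j _.
  apply: (@le_trans _ _ (\sum_(x <- t | depth x == j) ((2 : R) ^+ j)^-1 * c * g x)).
    rewrite big_seq_cond [leRHS]big_seq_cond.
    rewrite (eq_bigl (fun x => (x \in t) && (depth x == j))); last first.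
      move=> x; case: (boolP (x \in t)) => //= xt.
      by rewrite -val_eqE /= inordK ?ltnS ?depth_le.
    apply: ler_sum => x /andP[xt /eqP <-].
    by apply: ler_wpM2r; [exact: g_ge0 | exact: f_le].
  rewrite -mulr_sumr; apply: ler_wpM2l => //.
  by rewrite mulr_ge0 // invr_ge0 exprn_ge0.
rewrite -!mulr_suml; do 2!apply: ler_wpM2r => //.
exact: sum_inv_pow2_le2.
Qed.

Lemma pow_half_sqr (R : realType) (n : nat) :
  (2 : R) `^ (- (n%:R / 2)) * 2 `^ (- (n%:R / 2)) = ((2 : R) ^+ n)^-1.
Proof.
rewrite -powRD; last by apply/implyP => _; rewrite pnatr_eq0.
by rewrite -opprD -splitr powRN powR_mulrn.
Qed.

Lemma sum_fine_measure_le_trivIset d (T : measurableType d) (R : realType)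
    (mu : {finite_measure set T -> \bar R}) (A : {fset set T}) (Q : set T) :
  measurable Q -> (forall P, P \in A -> measurable P /\ P `<=` Q) ->
  trivIset [set` A] id -> \sum_(P <- A) fine (mu P) <= fine (mu Q).
Proof.
move=> mQ AQ Atriv.
have mA P : P \in A -> measurable P by case/AQ.
rewrite -lee_fin -sumEFin big_seq (eq_bigr mu); last first.
  by move=> P PA; rewrite fineK // fin_num_measure //; exact: mA.
rewrite -big_seq -measure_fbigsetU // fineK ?fin_num_measure //.
apply: le_measure; [apply/mem_set | exact/mem_set |].
  by rewrite big_seq; apply: bigsetU_measurable => P; exact: mA.
by rewrite -bigcup_fset => x [P /AQ[_ PQ] /PQ].
Qed.

Lemma closed_measurable (R : realType) (d : nat) (A : set 'rV[R]_d) :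
  closed A -> measurable (A : set (Rd R d)).
Proof.
move=> cA; rewrite -(setCK A); apply: measurableC; apply: sub_gen_smallest.
exact: closed_openC.
Qed.

Lemma setdist_le0 (R : realType) (d : nat) (A B : set 'rV[R]_d) :
  A `&` B !=set0 -> setdist A B <= 0.
Proof.
case=> x [Ax Bx]; apply: ge_inf.
  by exists 0 => _ [u [v [_ [_ ->]]]]; exact: sqrtr_ge0.
exists x, x; do 2!split => //.
by rewrite /Defs.edist big1 ?sqrtr0 // => i _; rewrite subrr expr0n.
Qed.

Section CantorCubes.
Variables (R : realType) (d : nat) (Q0 : set 'rV[R]_d).
Variable ch : set 'rV[R]_d -> set (set 'rV[R]_d).

Definition child_chain (n : nat) (Qs : nat -> set 'rV[R]_d) :=
  forall j, (0 < j <= n)%N -> ch (Qs j.-1) (Qs j).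

Lemma gen_cubes k A : gen Q0 ch k A -> cubes Q0 ch A.
Proof. by exists k. Qed.

Lemma child_chain_gen k n Qs : gen Q0 ch k (Qs 0%N) -> child_chain n Qs ->
  forall l, (l <= n)%N -> gen Q0 ch (k + l) (Qs l).
Proof.
move=> gen0 chain; elim=> [|l IHl] ln; first by rewrite addn0.
by rewrite addnS; exists (Qs l); [exact: IHl (ltnW ln) | exact: (chain l.+1)].
Qed.

Lemma gen_ancestor_chain k i P : gen Q0 ch (k + i) P ->
  exists Qs, [/\ gen Q0 ch k (Qs 0%N), Qs i = P & child_chain i Qs].
Proof.
elim: i P => [|i IHi] P.
  rewrite addn0 => genP; exists (fun _ => P); split => // j.
  by rewrite leqn0 andbC => /andP[/eqP ->].
rewrite addnS => -[A /IHi[Qs [gen0 QsA chain]] chAP].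
exists (fun l => if l == i.+1 then P else Qs l); split => //=; first by rewrite eqxx.
move=> j /andP[j_gt0 ji]; rewrite (_ : (j.-1 == i.+1) = false); last by apply/eqP; lia.
case: eqP => [->|/eqP ji1]; first by rewrite /= QsA.
by apply: chain; rewrite j_gt0 -ltnS ltn_neqAle ji1.
Qed.

Variable csep : R.
Hypothesis cc : cantor_construction csep Q0 ch.

Lemma child_sub Q Q' : cubes Q0 ch Q -> ch Q Q' -> Q' `<=` Q.
Proof.
move=> cubeQ chQQ'; have [_ _ _ cubeP] := cc.
by have [_ _ closed_ch _ _] := cubeP Q cubeQ; case: (closed_ch _ chQQ').
Qed.

Lemma gen_closed_diam_gt0 k A : gen Q0 ch k A -> closed A /\ 0 < diam A.
Proof.
have [_ compact_Q0 diam_Q0 cubeP] := cc.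
elim: k A => [A /= ->|k IHk A [A' genA' chA'A]].
  by split => //; apply: compact_closed => //; exact: norm_hausdorff.
have [_ diam_A'] := IHk _ genA'.
have [_ _ closed_ch diam_ch _] := cubeP A' (gen_cubes genA').
split; first by case: (closed_ch _ chA'A).
by apply: lt_le_trans (proj1 (diam_ch _ chA'A)); exact: divr_gt0.
Qed.

Lemma gen_disjoint k A B :
  gen Q0 ch k A -> gen Q0 ch k B -> A `&` B !=set0 -> A = B.
Proof.
have [csep_gt0 _ _ cubeP] := cc.
elim: k A B => [|k IHk] A B /=; first by move=> -> ->.
move=> [A' genA' chA'A] [B' genB' chB'B] AB.
have eA'B' : A' = B'.
  apply: IHk => //; case: AB => x [Ax Bx]; exists x.
  by split; [exact: child_sub (gen_cubes genA') chA'A _ Ax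
            | exact: child_sub (gen_cubes genB') chB'B _ Bx].
subst B'; apply: contrapT => A_neq_B.
have [_ _ _ _ sep] := cubeP A' (gen_cubes genA').
have := le_trans (sep _ _ chA'A chB'B A_neq_B) (setdist_le0 AB).
by rewrite leNgt mulr_gt0 // (gen_closed_diam_gt0 genA').2.
Qed.

Lemma child_chain_sub k n Qs : gen Q0 ch k (Qs 0%N) -> child_chain n Qs ->
  forall l m, (l <= m <= n)%N -> Qs m `<=` Qs l.
Proof.
move=> gen0 chain l; elim=> [|m IHm] /andP[lm mn].
  by rewrite leqn0 in lm; rewrite (eqP lm).
rewrite leq_eqVlt in lm; case/orP: lm => [/eqP -> //|lm].
apply: subset_trans (IHm _); last by rewrite -ltnS lm (ltnW mn).
apply: child_sub (chain _ _) => //.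
exact: gen_cubes (child_chain_gen gen0 chain (ltnW mn)).
Qed.

Lemma subcube_chain k Q P : gen Q0 ch k Q -> cubes Q0 ch P ->
  P !=set0 -> P `<=` Q ->
  exists j Qs, [/\ Qs 0%N = Q, Qs j = P & child_chain j Qs].
Proof.
move=> genQ [m _ genP] [x Px] PQ.
have [km|mk] := leqP k m.
  have [Qs [gen0 QsP chain]] : exists Qs,
      [/\ gen Q0 ch k (Qs 0%N), Qs (m - k)%N = P & child_chain (m - k) Qs].
    by apply: gen_ancestor_chain; rewrite subnKC.
  have PQs0 : P `<=` Qs 0%N.
    by rewrite -QsP; apply: (child_chain_sub gen0 chain); rewrite leqnn.
  exists (m - k)%N, Qs; split => //.
  by apply: (gen_disjoint gen0 genQ); exists x; split; [exact: PQs0 | exact: PQ].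
have [Qs [gen0 QsQ chain]] : exists Qs,
    [/\ gen Q0 ch m (Qs 0%N), Qs (k - m)%N = Q & child_chain (k - m) Qs].
  by apply: gen_ancestor_chain; rewrite subnKC // ltnW.
have QQs0 : Q `<=` Qs 0%N.
  by rewrite -QsQ; apply: (child_chain_sub gen0 chain); rewrite leqnn.
have eP : P = Qs 0%N.
  by apply: (gen_disjoint genP gen0); exists x; split => //; exact/QQs0/PQ.
have <- : Q = P by apply/seteqP; split => //; rewrite eP.
exists 0%N, (fun _ => Q); split => // j.
by rewrite leqn0 andbC => /andP[/eqP ->].
Qed.

Lemma sum_fine_measure_gen_le (mu : {finite_measure set (Rd R d) -> \bar R})
    n (A : {fset set 'rV[R]_d}) (Q : set 'rV[R]_d) :
  closed Q -> (forall P, P \in A -> gen Q0 ch n P /\ P `<=` Q) ->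
  \sum_(P <- A) fine (mu P) <= fine (mu Q).
Proof.
move=> closedQ AQ; apply: (@sum_fine_measure_le_trivIset _ (Rd R d) _ mu A Q).
- exact: closed_measurable.
- move=> P /AQ[genP PQ]; split => //.
  by apply: closed_measurable; case: (gen_closed_diam_gt0 genP).
- by move=> P P' /AQ[genP _] /AQ[genP' _]; apply: (gen_disjoint genP genP').
Qed.

End CantorCubes.

Section NonDoublingChains.
Variables (R : realType) (d : nat) (s csep cdb : R) (Q0 : set 'rV[R]_d).
Variable ch : set 'rV[R]_d -> set (set 'rV[R]_d).
Variable mu : {measure set (Rd R d) -> \bar R}.
Hypothesis cc : cantor_construction csep Q0 ch.
Hypothesis chain_decay : forall (n : nat) (Qs : nat -> set 'rV[R]_d),
  cubes Q0 ch (Qs 0%N) ->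
  (forall j : nat, (1 <= j <= n)%N ->
     ch (Qs j.-1) (Qs j) /\ ~ p_doubling s Q0 ch mu cdb (Qs j)) ->
  forall j : nat, (j <= n)%N ->
    Theta s mu (Qs j) <= 2 `^ (- (j%:R / 2)) * pdens s Q0 ch mu (Qs 0%N).

Lemma Theta_ge0 (P : set 'rV[R]_d) : 0 <= Theta s mu P.
Proof. by rewrite /Theta divr_ge0 ?fine_ge0 ?measure_ge0 ?powR_ge0. Qed.

Lemma sqr_Theta_le_chain k (Q P : set 'rV[R]_d) j Qs :
  gen Q0 ch k Q -> Qs 0%N = Q -> Qs j = P -> child_chain ch j Qs ->
  (forall P', cubes Q0 ch P' -> P `<=` P' -> P' `<=` Q ->
     ~ p_doubling s Q0 ch mu cdb P') ->
  Theta s mu P ^+ 2 <= ((2 : R) ^+ j)^-1 * pdens s Q0 ch mu Q ^+ 2.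
Proof.
move=> genQ Qs0 QsP chain nondoubling.
have gen0 : gen Q0 ch k (Qs 0%N) by rewrite Qs0.
have : Theta s mu P <= 2 `^ (- (j%:R / 2)) * pdens s Q0 ch mu Q.
  rewrite -Qs0 -QsP; apply: chain_decay (leqnn j); first exact: gen_cubes gen0.
  move=> l /andP[l_gt0 lj]; split; first by apply: chain; rewrite l_gt0.
  apply: nondoubling; first exact: gen_cubes (child_chain_gen gen0 chain lj).
  - by rewrite -QsP; apply: (child_chain_sub cc gen0 chain); rewrite lj leqnn.
  - by rewrite -Qs0; apply: (child_chain_sub cc gen0 chain); rewrite lj.
move=> Theta_le; rewrite expr2; apply: le_trans (ler_pM _ _ Theta_le Theta_le) _.
- exact: Theta_ge0.
- exact: Theta_ge0.
by rewrite mulrACA pow_half_sqr -expr2.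
Qed.

End NonDoublingChains.

Theorem lemma2p2 (R : realType) (d : nat) (s : R) (csep cdb : R)
  (Q0 : set 'rV[R]_d) (ch : set 'rV[R]_d -> set (set 'rV[R]_d))
  (mu : {finite_measure set (Rd R d) -> \bar R}) :
  0 < s -> s < d%:R ->
  cantor_construction csep Q0 ch ->
  mu (~` cantor_set Q0 ch) = 0%E ->
  (forall Q, cubes Q0 ch Q -> (0 < mu Q)%E) ->
  (* choice of c_db: the chain property *)
  (forall (n : nat) (Qs : nat -> set 'rV[R]_d),
     cubes Q0 ch (Qs 0%N) ->
     (forall j : nat, (1 <= j <= n)%N ->
        ch (Qs j.-1) (Qs j) /\ ~ p_doubling s Q0 ch mu cdb (Qs j)) ->
     forall j : nat, (j <= n)%N ->
       Theta s mu (Qs j) <= 2 `^ (- (j%:R / 2)) * pdens s Q0 ch mu (Qs 0%N)) ->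
  forall (Q : set 'rV[R]_d) (J : set (set 'rV[R]_d)),
    cubes Q0 ch Q ->
    (forall P, J P -> cubes Q0 ch P /\ P `<=` Q) ->
    (forall P, J P -> forall P', cubes Q0 ch P' -> P `<=` P' -> P' `<=` Q ->
       ~ p_doubling s Q0 ch mu cdb P') ->
    (sigma s mu J <= (2 * pdens s Q0 ch mu Q ^+ 2 * fine (mu Q))%:E)%E.
Proof.
move=> _ _ cc _ mu_gt0 chain_decay Q J [k _ genQ] JQ J_nondoubling.
have depth_ex P : exists j, J P ->
    exists Qs, [/\ Qs 0%N = Q, Qs j = P & child_chain ch j Qs].
  have [JP|] := pselect (J P); last by exists 0%N.
  have [cubeP PQ] := JQ P JP.
  have P_neq0 : P !=set0.
    by apply/set0P/eqP => P0; move: (mu_gt0 P cubeP); rewrite P0 measure0 ltxx.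
  have [j [Qs chainQP]] := subcube_chain cc genQ cubeP P_neq0 PQ.
  by exists j => _; exists Qs.
have [depth depthP] := choice depth_ex.
rewrite /sigma /esum; apply: ge_ereal_sup => _ [X [finX XJ] <-].
rewrite fsumEFin // lee_fin fsbig_finite //=.
have XJ' P : P \in fset_set X -> J P by rewrite in_fset_set // => /set_mem/XJ.
apply: (@sum_dyadic_layers _ _ _ depth (fun P => Theta s mu P ^+ 2)
  (fun P => fine (mu P))).
- exact: sqr_ge0.
- by rewrite fine_ge0 ?measure_ge0.
- by move=> P _; rewrite fine_ge0 ?measure_ge0.
- move=> P /XJ' JP; have [Qs [Qs0 QsP chain]] := depthP P JP.
  exact: (sqr_Theta_le_chain cc chain_decay genQ Qs0 QsP chain (J_nondoubling P JP)).
- move=> j; rewrite big_fset_condE.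
  apply: (sum_fine_measure_gen_le cc mu (n := k + j)).
    by case: (gen_closed_diam_gt0 cc genQ).
  move=> P; rewrite !inE => /andP[/XJ' JP /eqP <-]; split; last exact: (JQ P JP).2.
  have [Qs [Qs0 QsP chain]] := depthP P JP.
  have gen0 : gen Q0 ch k (Qs 0%N) by rewrite Qs0.
  by have := child_chain_gen gen0 chain (leqnn _); rewrite QsP.
Qed.
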